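(* Let $c\ge 0$ and let $(f_p)_{p\ge1}$ be real numbers with $f_1=0$ and $$f_p\le c+\frac{1}{p(p-1)}\sum_{k=1}^{p-1}k f_k\quad\text{for all } p\ge 2.$$ Then $f_p\le 2c$ for all $p\ge 1$. *)

From Stdlib Require Import Reals.
Open Scope R_scope.

(* By strong induction on p: if f_k <= 2c for all 1 <= k < p, then
   sum_{k=1}^{p-1} k f_k <= 2c * p(p-1)/2, so the recursion gives
   f_p <= c + c = 2c. *)

From Stdlib Require Import Reals Lra Lia Wf_nat.
Open Scope R_scope.

Lemma sum_f_R0_INR_S (n : nat) :
  sum_f_R0 (fun j => INR (S j)) n = INR (S n) * INR (S (S n)) / 2.
Proof.
  induction n as [|n IH].
  - simpl. lra.
  - rewrite tech5, IH, !S_INR. field.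
Qed.

Lemma sum_f_R0_weighted_le (w a : nat -> R) (M : R) (n : nat) :
  (forall j, (j <= n)%nat -> 0 <= w j) ->
  (forall j, (j <= n)%nat -> a j <= M) ->
  sum_f_R0 (fun j => w j * a j) n <= M * sum_f_R0 w n.
Proof.
  intros hw ha.
  rewrite scal_sum.
  apply sum_Rle; intros j hj.
  apply Rmult_le_compat_l; auto.
Qed.

Lemma weighted_prefix_sum_le (a : nat -> R) (M : R) (n : nat) :
  (forall k, (1 <= k <= S n)%nat -> a k <= M) ->
  sum_f_R0 (fun j => INR (S j) * a (S j)) n <= M * (INR (S n) * INR (S (S n)) / 2).
Proof.
  intros ha.
  rewrite <- sum_f_R0_INR_S.
  apply (sum_f_R0_weighted_le (fun j => INR (S j)) (fun j => a (S j))).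
  - intros j _. apply pos_INR.
  - intros j hj. apply ha. lia.
Qed.

Lemma recursion_step_le (c : R) (f : nat -> R) (p : nat) : (2 <= p)%nat ->
  (forall k, (1 <= k < p)%nat -> f k <= 2 * c) ->
  f p <= c + / (INR p * (INR p - 1)) *
           sum_f_R0 (fun j => INR (S j) * f (S j)) (p - 2) ->
  f p <= 2 * c.
Proof.
  intros hp hprev hrec.
  destruct p as [|[|m]]; [lia | lia |].
  replace (S (S m) - 2)%nat with m in hrec by lia.
  pose proof (weighted_prefix_sum_le f (2 * c) m
                (fun k hk => hprev k ltac:(lia))) as hsum.
  set (D := INR (S m) * INR (S (S m))) in hsum.
  assert (hden : INR (S (S m)) * (INR (S (S m)) - 1) = D)
    by (unfold D; rewrite (S_INR (S m)); ring).
  rewrite hden in hrec.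
  assert (hD : 0 < D) by (apply Rmult_lt_0_compat; apply lt_0_INR; lia).
  assert (hmean : / D * sum_f_R0 (fun j => INR (S j) * f (S j)) m <= c).
  { apply (Rle_trans _ (/ D * (2 * c * (D / 2)))).
    - apply Rmult_le_compat_l; [left; apply Rinv_0_lt_compat |]; assumption.
    - right. field. lra. }
  lra.
Qed.

Theorem lemma2p3 (c : R) (f : nat -> R) (hc : 0 <= c) (hf1 : f 1%nat = 0)
  (hrec : forall p : nat, (2 <= p)%nat ->
     f p <= c + / (INR p * (INR p - 1)) *
              sum_f_R0 (fun j => INR (S j) * f (S j)) (p - 2)) :
  forall p : nat, (1 <= p)%nat -> f p <= 2 * c.
Proof.
  intros p.
  induction p as [p IH] using lt_wf_ind.
  intros hp.
  destruct (Nat.eq_dec p 1) as [-> | hp1].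
  - rewrite hf1. lra.
  - apply (recursion_step_le c f p); [lia | | apply hrec; lia].
    intros k hk. apply IH; lia.
Qed.
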